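(* Let $\mathbb{K}$ be a field of characteristic not $2$ and $n\geq 3$. Let $\mathcal{V}$ be a linear subspace of $M_n(\mathbb{K})$ in which every matrix has at most two distinct eigenvalues in $\mathbb{K}$. If $A,B\in\mathcal{V}$ satisfy $\operatorname{rk}A\leq 1$, $\operatorname{rk}B\leq 1$ and $\operatorname{tr}A=\operatorname{tr}B=0$, then $\operatorname{tr}(AB)=0$. *)

From HB Require Import structures.
From mathcomp Require Import all_boot all_order all_algebra.
Set Implicit Arguments. Unset Strict Implicit. Unset Printing Implicit Defensive.
Import GRing.Theory.
Local Open Scope ring_scope.

Definition at_most_two_eigenvalues (K : fieldType) (n : nat) (M : 'M[K]_n) : Prop :=
  forall a b c : K, eigenvalue M a -> eigenvalue M b -> eigenvalue M c ->
    [\/ a = b, a = c | b = c].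

From HB Require Import structures.
From mathcomp Require Import all_boot all_order all_algebra.
Import GRing.Theory.
Local Open Scope ring_scope.

(* A matrix of rank at most one is an outer product c r of a
   column c and a row r, and its trace is the scalar r c.  Writing A = c r
   and B = d s with r c = s d = 0 (trace zero), one gets
   tr (A B) = (s c) (r d) =: q p.  Suppose q p <> 0 and put
   M = A + (q p)^-1 B, a matrix of V.  For every l with l^2 = 1 the row
   vector l q r + s is a nonzero left eigenvector of M for l, so 1 and -1
   are eigenvalues of M; and 0 is one too, since rank M <= 2 < n.  As the
   characteristic is not 2, the values 0, 1, -1 are pairwise distinct,
   contradicting the hypothesis on V. *)

Lemma rank_le1_outer {K : fieldType} {m n : nat} {A : 'M[K]_(m, n)} :
  (\rank A <= 1)%N -> exists (c : 'cV[K]_m) (r : 'rV[K]_n), A = c *m r.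
Proof.
move: (col_base A) (row_base A) (mulmx_base A).
case: (\rank A) => [|[|k]] // C R <- _; last by exists C, R.
by exists 0, 0; rewrite !thinmx0 mul0mx mulmx0.
Qed.

Section OuterProducts.
Context {K : fieldType} {n : nat}.
Implicit Types (c d : 'cV[K]_n) (r s w : 'rV[K]_n).

Lemma trace_outer c r : \tr (c *m r) = (r *m c) 0 0.
Proof. by rewrite mxtrace_mulC trace_mx11. Qed.

Lemma row_mul_outer w c r : w *m (c *m r) = (w *m c) 0 0 *: r.
Proof. by rewrite mulmxA {1}[w *m c]mx11_scalar mul_scalar_mx. Qed.

Lemma trace_outer_mul c r d s :
  \tr ((c *m r) *m (d *m s)) = (s *m c) 0 0 * (r *m d) 0 0.
Proof.
by rewrite -mulmxA trace_outer row_mul_outer -scalemxAl mxE mulrC.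
Qed.

Lemma inner_scaleD e r s c :
  ((e *: r + s) *m c) 0 0 = e * (r *m c) 0 0 + (s *m c) 0 0.
Proof. by rewrite mulmxDl -scalemxAl !mxE. Qed.

Lemma eigenvalue0_of_rank {M : 'M[K]_n} : (\rank M < n)%N -> eigenvalue M 0.
Proof.
move=> rkM; rewrite /eigenvalue /eigenspace raddf0 subr0 kermx_eq0.
by rewrite /row_free neq_ltn rkM.
Qed.

(* The pencil of two traceless rank-one matrices c r and d s, normalised by
   q p = (s c) (r d) <> 0, has every square root of 1 as an eigenvalue:
   l q r + s is a left eigenvector for l. *)
Lemma outer_pencil_eigenvalue c r d s (l : K) :
  (r *m c) 0 0 = 0 -> (s *m d) 0 0 = 0 ->
  (s *m c) 0 0 * (r *m d) 0 0 != 0 -> l * l = 1 ->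
  eigenvalue (c *m r + ((s *m c) 0 0 * (r *m d) 0 0)^-1 *: (d *m s)) l.
Proof.
set q := (s *m c) 0 0; set p := (r *m d) 0 0 => rc0 sd0 qp0 ll1.
apply/eigenvalueP; exists ((l * q) *: r + s).
  rewrite mulmxDr -scalemxAr !row_mul_outer !inner_scaleD rc0 sd0.
  rewrite mulr0 add0r addr0 scalerDr !scalerA mulrA ll1 mul1r.
  by rewrite -/q -/p -(mulrA l) mulrCA mulVf // mulr1.
apply/negP => /eqP v0.
have := congr1 (fun w : 'rV[K]_n => (w *m d) 0 0) v0.
rewrite /= inner_scaleD sd0 addr0 mul0mx [RHS]mxE -/p -mulrA => /eqP.
rewrite mulf_eq0 (negbTE qp0) orbF => /eqP l0.
by move: ll1; rewrite l0 mul0r => /eqP; rewrite eq_sym oner_eq0.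
Qed.

End OuterProducts.

Lemma three_eigenvalues {K : fieldType} {n : nat} {M : 'M[K]_n} :
  (2 \notin [pchar K])%N -> eigenvalue M 0 -> eigenvalue M 1 ->
  eigenvalue M (-1) -> ~ at_most_two_eigenvalues M.
Proof.
move=> hK ev0 ev1 evN /(_ 0 1 (-1) ev0 ev1 evN).
have two0 : (2%:R : K) != 0 by apply: contra hK => char2; apply/andP.
case=> /eqP.
- by rewrite eq_sym oner_eq0.
- by rewrite eq_sym oppr_eq0 oner_eq0.
- by rewrite -subr_eq0 opprK -mulr2n (negbTE two0).
Qed.

Theorem mainTheorem10 (K : fieldType) (n : nat) (V : {vspace 'M[K]_n})
  (hK : (2 \notin [pchar K])%N) (hn : (3 <= n)%N)
  (hV : forall M : 'M[K]_n, M \in V -> at_most_two_eigenvalues M)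
  (A B : 'M[K]_n) (hA : A \in V) (hB : B \in V)
  (rA : (\rank A <= 1)%N) (rB : (\rank B <= 1)%N)
  (tA : \tr A = 0) (tB : \tr B = 0) :
  \tr (A *m B) = 0.
Proof.
have [c [r eA]] := rank_le1_outer rA; have [d [s eB]] := rank_le1_outer rB.
have rc0 : (r *m c) 0 0 = 0 by rewrite -trace_outer -eA.
have sd0 : (s *m d) 0 0 = 0 by rewrite -trace_outer -eB.
rewrite eA eB trace_outer_mul; apply/eqP/negPn/negP => qp0.
set M := A + ((s *m c) 0 0 * (r *m d) 0 0)^-1 *: B.
have MV : M \in V by rewrite memvD // memvZ.
have evl l : l * l = 1 -> eigenvalue M l.
  by move=> ll1; rewrite /M eA eB; apply: outer_pencil_eigenvalue.
have rkM : (\rank M < n)%N.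
  apply: leq_trans hn; apply: leq_ltn_trans (mxrank_add _ _) _.
  by rewrite ltnS (leq_add rA) // (leq_trans (mxrank_scale _ _)).
apply: (three_eigenvalues hK (eigenvalue0_of_rank rkM)) (hV M MV).
- by apply: evl; rewrite mulr1.
- by apply: evl; rewrite mulrNN mulr1.
Qed.
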